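(* Let $\upsilon\in(0,1]$, $P_b>0$, $h>0$, $T>0$, $\sigma^2>0$, $B>0$, $L>0$. Consider Problem P4: maximize $S_{\mathrm{off}}(t)=\upsilon P_bhT+\left(\frac{\sigma^2}{h}-\upsilon P_bh\right)t-\frac{\sigma^2}{h}t\,2^{\frac{L}{Bt}}$ over $t$ subject to $0<t<T$ and $S_{\mathrm{off}}(t)\ge 0$. Let $W$ be the principal branch of the Lambert function ($W(x)e^{W(x)}=x$), let $$\rho(h)=\frac{\ln 2}{B\left[1+W\!\left(\frac{\upsilon P_bh^2}{\sigma^2e}-\frac1e\right)\right]},$$ and define $$a''=\frac{\sigma^2}{\upsilon}\left\{1+\left[\frac{L\ln2}{BT}+W\!\left(-e^{-1-\frac{L\ln2}{BT}}\right)\right]\exp\!\left(\frac{L\ln2}{BT}+W\!\left(-e^{-1-\frac{L\ln 2}{BT}}\right)+1\right)\right\}.$$ Then the optimal offloading duration $t^*$ solving P4 satisfies: (1) if $P_bh^2<a''$, Problem P4 is infeasible; (2) if $P_bh^2\ge a''$, $t^*=\rho(h)L$.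
   Context: In the offloading mode the interval $[0,T]$ is split into power transfer of length $T-t$ (harvesting $\upsilon P_bh(T-t)$) followed by fixed-rate transmission of $L$ bits over duration $t$ with bandwidth $B$, channel power gain $h$ and noise variance $\sigma^2$ (energy $(2^{L/(Bt)}-1)\frac{\sigma^2}{h}t$); $S_{\mathrm{off}}$ is the resulting energy savings. *)

From Stdlib Require Import Reals ClassicalEpsilon.
Open Scope R_scope.

(* Principal branch W_0 of the Lambert function: for x >= -1/e, the unique
   w >= -1 with w * e^w = x.  (Junk value outside the domain.) *)
Definition LambertW0 (x : R) : R :=
  epsilon (inhabits 0) (fun w => -1 <= w /\ w * exp w = x).

Definition S_off (ups Pb h T sigma2 B L t : R) : R :=
  ups * Pb * h * T + (sigma2 / h - ups * Pb * h) * t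
  - sigma2 / h * t * Rpower 2 (L / (B * t)).

Definition P4_feasible (ups Pb h T sigma2 B L t : R) : Prop :=
  0 < t < T /\ 0 <= S_off ups Pb h T sigma2 B L t.

Definition P4_optimal (ups Pb h T sigma2 B L t : R) : Prop :=
  P4_feasible ups Pb h T sigma2 B L t /\
  forall s, P4_feasible ups Pb h T sigma2 B L s ->
    S_off ups Pb h T sigma2 B L s <= S_off ups Pb h T sigma2 B L t.

Definition rho (ups Pb h sigma2 B : R) : R :=
  ln 2 / (B * (1 + LambertW0 (ups * Pb * h ^ 2 / (sigma2 * exp 1) - / exp 1))).

Definition a_pp (ups sigma2 B L T : R) : R :=
  let c := L * ln 2 / (B * T) in
  let w := LambertW0 (- exp (-1 - c)) in
  sigma2 / ups * (1 + (c + w) * exp (c + w + 1)).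

(* Substituting x = L ln 2 / (B t) turns the t-dependent part of S_off into
   (sigma2/h) t ((1 - a) - e^x) with a = ups Pb h^2 / sigma2.  The tangent of
   exp at xs = 1 + W((a - 1)/e), the root of (xs - 1) e^xs = a - 1, bounds it
   by -(sigma2/h) (L ln 2 / B) e^xs, with equality exactly at
   t = L ln 2 / (B xs) = rho(h) L.  This maximum is nonnegative (and then
   attained before T) iff xs >= z, where z = c + W(-e^(-1-c)) + 1 with
   c = L ln 2 / (B T); both this condition and Pb h^2 >= a'' compare xs with z
   through functions increasing on [0, +oo). *)

From Stdlib Require Import Reals Psatz ClassicalEpsilon.
Open Scope R_scope.

Lemma LambertW0_spec (y : R) : - / exp 1 <= y ->
  -1 <= LambertW0 y /\ LambertW0 y * exp (LambertW0 y) = y.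
Proof.
  intro Hy; unfold LambertW0; apply epsilon_spec.
  set (f := fun w => w * exp w - y).
  assert (Hf : continuity f).
  { apply continuity_minus; [apply continuity_mult|apply continuity_const; now intros ? ?].
    - apply derivable_continuous, derivable_id.
    - apply derivable_continuous, derivable_exp. }
  assert (Hf_left : f (-1) <= 0).
  { unfold f; replace (exp (-1)) with (/ exp 1) by (rewrite <- exp_Ropp; f_equal; ring).
    lra. }
  assert (Hf_right : 0 <= f (1 + Rabs y)).
  { unfold f; pose proof (exp_ineq1_le (1 + Rabs y)).
    pose proof (Rabs_pos y); pose proof (Rle_abs y); nra. }
  destruct (IVT_cor f (-1) (1 + Rabs y) Hf) as [w [Hw Hfw]];
    [pose proof (Rabs_pos y); lra | nra |].
  exists w; unfold f in Hfw; lra.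
Qed.

Lemma exp_tangent_le (x y : R) : exp x * (1 + (y - x)) <= exp y.
Proof.
  replace (exp y) with (exp x * exp (y - x)) by (rewrite <- exp_plus; f_equal; ring).
  apply Rmult_le_compat_l; [left; apply exp_pos | apply exp_ineq1_le].
Qed.

Lemma exp_tangent_lt (x y : R) : y <> x -> exp x * (1 + (y - x)) < exp y.
Proof.
  intro Hyx.
  replace (exp y) with (exp x * exp (y - x)) by (rewrite <- exp_plus; f_equal; ring).
  apply Rmult_lt_compat_l; [apply exp_pos | apply exp_ineq1; lra].
Qed.

Lemma strict_incr_le_iff (F : R -> R) :
  (forall u v, 0 <= u -> u < v -> F u < F v) ->
  forall u v, 0 <= u -> 0 <= v -> (F u <= F v <-> u <= v).
Proof.
  intros HF u v Hu Hv; split; intro H.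
  - destruct (Rle_lt_dec u v) as [|Hvu]; [assumption|].
    pose proof (HF v u Hv Hvu); lra.
  - destruct (Rle_lt_or_eq_dec u v H) as [Huv|<-]; [left; now apply HF | lra].
Qed.

(* [Pb h^2 = sigma2/ups * (1 + phi xs)] and [a'' = sigma2/ups * (1 + phi z)]. *)
Definition phi (u : R) : R := (u - 1) * exp u.

(* The maximal savings have the sign of [psi xs - psi z]. *)
Definition psi (u : R) : R := exp (- u) + u.

Lemma phi_strict_incr (u v : R) : 0 <= u -> u < v -> phi u < phi v.
Proof.
  intros Hu Huv; unfold phi.
  pose proof (exp_pos u); pose proof (exp_pos v).
  destruct (Rle_lt_dec 1 v) as [Hv|Hv].
  - pose proof (exp_tangent_le u v).
    assert (0 < exp u * (v * (v - u))) by (apply Rmult_lt_0_compat; nra).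
    nra.
  - pose proof (exp_tangent_lt v u ltac:(lra)).
    assert (0 <= exp v * (u * (v - u))) by (apply Rmult_le_pos; nra).
    nra.
Qed.

Lemma psi_strict_incr (u v : R) : 0 <= u -> u < v -> psi u < psi v.
Proof.
  intros Hu Huv; unfold psi.
  pose proof (exp_tangent_lt (- u) (- v) ltac:(lra)).
  assert (exp (- u) <= 1).
  { rewrite <- exp_0; destruct Hu as [Hu|<-]; [left; apply exp_increasing; lra|].
    right; f_equal; ring. }
  nra.
Qed.

Lemma LambertW0_phi (a : R) : 0 < a ->
  0 < 1 + LambertW0 ((a - 1) / exp 1) /\
  phi (1 + LambertW0 ((a - 1) / exp 1)) = a - 1.
Proof.
  intro Ha; pose proof (exp_pos 1) as He.
  destruct (LambertW0_spec ((a - 1) / exp 1)) as [Hw Hwe].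
  { unfold Rdiv; pose proof (Rinv_0_lt_compat _ He); nra. }
  set (w := LambertW0 _) in *.
  assert (Hphi : phi (1 + w) = a - 1).
  { unfold phi; rewrite exp_plus; replace (1 + w - 1) with w by ring.
    replace (w * (exp 1 * exp w)) with (w * exp w * exp 1) by ring.
    rewrite Hwe; field; lra. }
  split; [|exact Hphi].
  destruct Hw as [Hw|Hw]; [lra|].
  unfold phi in Hphi; rewrite <- Hw in Hphi.
  replace (1 + -1) with 0 in Hphi by ring; rewrite exp_0 in Hphi; lra.
Qed.

Lemma LambertW0_psi (c : R) : 0 < c ->
  0 < c + LambertW0 (- exp (-1 - c)) + 1 /\
  psi (c + LambertW0 (- exp (-1 - c)) + 1) = 1 + c.
Proof.
  intro Hc.
  destruct (LambertW0_spec (- exp (-1 - c))) as [Hw Hwe].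
  { apply Ropp_le_contravar; rewrite <- exp_Ropp; left; apply exp_increasing; lra. }
  set (w := LambertW0 _) in *.
  split; [lra|].
  assert (Hez : exp (- (c + w + 1)) = - w).
  { replace (- (c + w + 1)) with (-1 - c + - w) by ring.
    rewrite exp_plus, exp_Ropp.
    replace (exp (-1 - c)) with (- (w * exp w)) by lra.
    field; apply Rgt_not_eq, exp_pos. }
  unfold psi; rewrite Hez; ring.
Qed.

Lemma ln2_pos : 0 < ln 2.
Proof. rewrite <- ln_1; apply ln_increasing; lra. Qed.

Lemma gain_le_tangent (a A xs t : R) : 0 < t -> phi xs = a - 1 ->
  t * (1 - a) - t * exp (A / t) <= - A * exp xs.
Proof.
  intros Ht Hphi; unfold phi in Hphi.
  pose proof (exp_tangent_le xs (A / t)).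
  replace A with (t * (A / t)) at 2 by (field; lra).
  nra.
Qed.

Lemma gain_lt_tangent (a A xs t : R) : 0 < t -> phi xs = a - 1 -> A / t <> xs ->
  t * (1 - a) - t * exp (A / t) < - A * exp xs.
Proof.
  intros Ht Hphi Hx; unfold phi in Hphi.
  pose proof (exp_tangent_lt xs (A / t) Hx).
  replace A with (t * (A / t)) at 2 by (field; lra).
  nra.
Qed.

Section OffloadingDuration.

Variables ups Pb h T sigma2 B L : R.
Hypotheses (Hups : 0 < ups) (HPb : 0 < Pb) (Hh : 0 < h) (HT : 0 < T)
  (Hsigma2 : 0 < sigma2) (HB : 0 < B) (HL : 0 < L).

Let a := ups * Pb * h ^ 2 / sigma2.
Let A := L * ln 2 / B.
Let c := L * ln 2 / (B * T).
Let xs := 1 + LambertW0 ((a - 1) / exp 1).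
Let z := c + LambertW0 (- exp (-1 - c)) + 1.
Let Smax := sigma2 / h * (a * T - A * exp xs).

Lemma a_pos : 0 < a.
Proof.
  unfold a; apply Rdiv_lt_0_compat; [apply Rmult_lt_0_compat; [nra | apply pow_lt] |]; lra.
Qed.

Lemma A_pos : 0 < A.
Proof. pose proof ln2_pos; unfold A; apply Rdiv_lt_0_compat; nra. Qed.

Lemma c_pos : 0 < c.
Proof. pose proof ln2_pos; unfold c; apply Rdiv_lt_0_compat; nra. Qed.

Lemma xs_pos : 0 < xs.
Proof. apply LambertW0_phi, a_pos. Qed.

Lemma phi_xs : phi xs = a - 1.
Proof. apply LambertW0_phi, a_pos. Qed.

Lemma rho_mul_L : rho ups Pb h sigma2 B * L = A / xs.
Proof.
  pose proof xs_pos; unfold rho.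
  replace (ups * Pb * h ^ 2 / (sigma2 * exp 1) - / exp 1) with ((a - 1) / exp 1)
    by (unfold a; field; split; [apply Rgt_not_eq, exp_pos | lra]).
  unfold A; fold xs; field; lra.
Qed.

Lemma S_off_gain (t : R) : 0 < t ->
  S_off ups Pb h T sigma2 B L t =
  sigma2 / h * (a * T + (t * (1 - a) - t * exp (A / t))).
Proof.
  intro Ht; unfold S_off, Rpower, a, A.
  replace (L / (B * t) * ln 2) with (L * ln 2 / B / t) by (field; lra).
  field; lra.
Qed.

Lemma S_off_le_Smax (t : R) : 0 < t -> S_off ups Pb h T sigma2 B L t <= Smax.
Proof.
  intro Ht; rewrite S_off_gain by exact Ht; unfold Smax.
  pose proof (gain_le_tangent a A xs t Ht phi_xs).
  apply Rmult_le_compat_l; [left; apply Rdiv_lt_0_compat|]; lra.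
Qed.

Lemma S_off_lt_Smax (t : R) : 0 < t -> t <> A / xs ->
  S_off ups Pb h T sigma2 B L t < Smax.
Proof.
  intros Ht Hne; rewrite S_off_gain by exact Ht; unfold Smax.
  pose proof xs_pos.
  assert (Hx : A / t <> xs).
  { intro Hx; apply Hne; rewrite <- Hx; field; split; [lra|].
    intro HA; rewrite HA in Hx; unfold Rdiv in Hx; lra. }
  pose proof (gain_lt_tangent a A xs t Ht phi_xs Hx).
  apply Rmult_lt_compat_l; [apply Rdiv_lt_0_compat|]; lra.
Qed.

Lemma S_off_opt : S_off ups Pb h T sigma2 B L (A / xs) = Smax.
Proof.
  pose proof xs_pos; pose proof A_pos; pose proof phi_xs as Hphi; unfold phi in Hphi.
  rewrite S_off_gain by (apply Rdiv_lt_0_compat; lra).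
  replace (A / (A / xs)) with xs by (field; lra).
  unfold Smax; replace a with (1 + (xs - 1) * exp xs) by lra.
  field; lra.
Qed.

Lemma opt_lt_T : 0 <= Smax -> A / xs < T.
Proof.
  intro HS; unfold Smax in HS.
  pose proof xs_pos; pose proof phi_xs as Hphi; unfold phi in Hphi.
  assert (0 <= a * T - A * exp xs).
  { apply (Rmult_le_reg_l (sigma2 / h)); [apply Rdiv_lt_0_compat|]; lra. }
  pose proof (exp_ineq1 xs ltac:(lra)).
  assert (A < xs * T) by nra.
  apply (Rmult_lt_reg_r xs); [lra|].
  replace (A / xs * xs) with A by (field; lra); lra.
Qed.

Lemma Smax_psi_gap : Smax = sigma2 / h * T * exp xs * (psi xs - psi z).
Proof.
  pose proof (exp_pos xs); pose proof phi_xs as Hphi; unfold phi in Hphi.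
  assert (HA : A = c * T) by (unfold A, c; field; lra).
  unfold z; rewrite (proj2 (LambertW0_psi c c_pos)).
  unfold Smax, psi; rewrite exp_Ropp, HA.
  replace a with (1 + (xs - 1) * exp xs) by lra.
  field; lra.
Qed.

Lemma a_pp_phi_gap : Pb * h ^ 2 - a_pp ups sigma2 B L T = sigma2 / ups * (phi xs - phi z).
Proof.
  rewrite phi_xs; unfold a_pp, phi, z; fold c.
  replace (c + LambertW0 (- exp (-1 - c)) + 1 - 1) with (c + LambertW0 (- exp (-1 - c)))
    by ring.
  unfold a; field; lra.
Qed.

Lemma Smax_nonneg_iff : 0 <= Smax <-> a_pp ups sigma2 B L T <= Pb * h ^ 2.
Proof.
  assert (Hz : 0 <= z) by (left; apply (LambertW0_psi c c_pos)).
  assert (Hxs : 0 <= xs) by (left; apply xs_pos).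
  assert (HK : 0 < sigma2 / h * T * exp xs).
  { pose proof (exp_pos xs); assert (0 < sigma2 / h) by (apply Rdiv_lt_0_compat; lra).
    apply Rmult_lt_0_compat; [apply Rmult_lt_0_compat|]; lra. }
  assert (Hk : 0 < sigma2 / ups) by (apply Rdiv_lt_0_compat; lra).
  pose proof Smax_psi_gap as HS; pose proof a_pp_phi_gap as Ha.
  pose proof (strict_incr_le_iff psi psi_strict_incr z xs Hz Hxs) as Hpsi.
  pose proof (strict_incr_le_iff phi phi_strict_incr z xs Hz Hxs) as Hphi.
  split; intro Hle.
  - assert (psi z <= psi xs) by nra. assert (phi z <= phi xs) by tauto. nra.
  - assert (phi z <= phi xs) by nra. assert (psi z <= psi xs) by tauto. nra.
Qed.

Lemma P4_infeasible : Pb * h ^ 2 < a_pp ups sigma2 B L T ->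
  ~ exists t, P4_feasible ups Pb h T sigma2 B L t.
Proof.
  intros Hlt [t [[Ht _] HS]].
  pose proof (S_off_le_Smax t Ht).
  assert (~ 0 <= Smax) by (rewrite Smax_nonneg_iff; lra).
  lra.
Qed.

Lemma P4_optimal_iff : a_pp ups sigma2 B L T <= Pb * h ^ 2 ->
  forall t, P4_optimal ups Pb h T sigma2 B L t <-> t = rho ups Pb h sigma2 B * L.
Proof.
  intros Hge t; rewrite rho_mul_L.
  apply Smax_nonneg_iff in Hge.
  assert (Hopt_feas : P4_feasible ups Pb h T sigma2 B L (A / xs)).
  { pose proof xs_pos; pose proof A_pos; unfold P4_feasible; rewrite S_off_opt.
    repeat split; [apply Rdiv_lt_0_compat | apply opt_lt_T |]; lra. }
  split.
  - intros [[[Ht _] _] Hmax].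
    specialize (Hmax _ Hopt_feas); rewrite S_off_opt in Hmax.
    destruct (Req_dec t (A / xs)) as [|Hne]; [assumption|].
    pose proof (S_off_lt_Smax t Ht Hne); lra.
  - intros ->; split; [exact Hopt_feas|].
    intros s [[Hs _] _]; rewrite S_off_opt; now apply S_off_le_Smax.
Qed.

End OffloadingDuration.

Theorem theorem2 (ups Pb h T sigma2 B L : R) :
  0 < ups <= 1 -> 0 < Pb -> 0 < h -> 0 < T -> 0 < sigma2 -> 0 < B -> 0 < L ->
  (Pb * h ^ 2 < a_pp ups sigma2 B L T ->
     ~ exists t, P4_feasible ups Pb h T sigma2 B L t) /\
  (a_pp ups sigma2 B L T <= Pb * h ^ 2 ->
     forall t, P4_optimal ups Pb h T sigma2 B L t <->
               t = rho ups Pb h sigma2 B * L).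
Proof.
  intros [Hups _] HPb Hh HT Hsigma2 HB HL; split.
  - now apply P4_infeasible.
  - now apply P4_optimal_iff.
Qed.
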